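(* Let $\lambda_j\ge 0$ ($j=1,\dots,k$), not all zero, and $\gamma_i>0$ ($i=1,\dots,n$). Let $(\{\hat\theta'_i\}_{i=1}^n,\{\hat w_j\}_{j=1}^k,\hat{\bar w})$ be a minimizer of $$F_{MTL}(\{\theta_i\},\{w_j\},\bar w)=\sum_{j=1}^k\Big(\sum_{i\in\mathcal I_j}\Big(f_i(\theta_i)+\frac{\gamma_i}{2}\|\theta_i-w_j\|^2\Big)+\frac{\lambda_j}{2}\|w_j-\bar w\|^2\Big)$$ over $\theta_i\in\mathbb R^d$, $w_j\in\mathbb R^d$, $\bar w\in\mathbb R^d$. Set $\alpha_j=\frac{\lambda_j}{\lambda_j+\sum_{i\in\mathcal I_j}\gamma_i}$ for $j=1,\dots,k$, and let $\{\hat\theta_i\}_{i=1}^n$ be the unique minimizer of the objective $F$ (defined in the context) with these $\alpha_j$ and $\gamma_i$. Then $\hat\theta_i=\hat\theta'_i$ for all $i=1,\dots,n$.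
   Context: Clients $1,\dots,n$ are partitioned into nonempty disjoint clusters $\mathcal I_1,\dots,\mathcal I_k$; $d\ge1$. Each $f_i:\mathbb R^d\to\mathbb R$ is differentiable, $\mu$-strongly convex and $L$-smooth ($0<\mu\le L$). Given weights $\gamma_i>0$ and $\alpha_j\in[0,1]$ (not all $\alpha_j=0$), for $\Theta=(\theta_1,\dots,\theta_n)$ define $\bar\theta_j=\frac{\sum_{i\in\mathcal I_j}\gamma_i\theta_i}{\sum_{i\in\mathcal I_j}\gamma_i}$, $\bar\theta=\frac{\sum_{j=1}^k\sum_{i\in\mathcal I_j}\alpha_j\gamma_i\theta_i}{\sum_{j=1}^k\sum_{i\in\mathcal I_j}\alpha_j\gamma_i}$, and $$F(\Theta)=\sum_{j=1}^k\sum_{i\in\mathcal I_j}\Big(f_i(\theta_i)+\frac{(1-\alpha_j)\gamma_i}{2}\|\theta_i-\bar\theta_j\|^2+\frac{\alpha_j\gamma_i}{2}\|\theta_i-\bar\theta\|^2\Big).$$ *)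

From HB Require Import structures.
From mathcomp Require Import all_boot all_order all_algebra.
From mathcomp Require Import all_classical all_reals all_analysis.
Set Implicit Arguments. Unset Strict Implicit. Unset Printing Implicit Defensive.
Import Order.TTheory GRing.Theory Num.Theory.
Import numFieldNormedType.Exports.
Local Open Scope ring_scope.

Definition dotv (R : realType) (d : nat) (u v : 'rV[R]_d) : R :=
  \sum_(l < d) u 0 l * v 0 l.
Definition enorm (R : realType) (d : nat) (u : 'rV[R]_d) : R :=
  Num.sqrt (dotv u u).

Definition grad (R : realType) (d : nat) (f : 'rV[R]_d -> R) (x : 'rV[R]_d)
  : 'rV[R]_d := \row_(l < d) ('d f x (delta_mx 0 l : 'rV[R]_d)).

Definition differentiable_everywhere (R : realType) (d : nat)
  (f : 'rV[R]_d -> R) : Prop := forall x : 'rV[R]_d, differentiable f x.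

Definition strongly_convex (R : realType) (d : nat) (mu : R)
  (f : 'rV[R]_d -> R) : Prop :=
  forall (x y : 'rV[R]_d) (t : R), 0 <= t -> t <= 1 ->
    f (t *: x + (1 - t) *: y) <=
      t * f x + (1 - t) * f y - mu / 2 * t * (1 - t) * (enorm (x - y)) ^+ 2.

Definition L_smooth (R : realType) (d : nat) (L : R) (f : 'rV[R]_d -> R) : Prop :=
  differentiable_everywhere f /\
  forall x y : 'rV[R]_d, enorm (grad f x - grad f y) <= L * enorm (x - y).

(* clusters given by a map c : 'I_n -> 'I_k (client i lies in cluster I_(c i)) *)
Definition csum (R : realType) (n k : nat) (c : 'I_n -> 'I_k) (j : 'I_k)
  (g : 'I_n -> R) : R := \sum_(i < n | c i == j) g i.

Definition F_MTL (R : realType) (n k d : nat) (c : 'I_n -> 'I_k)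
  (f : 'I_n -> 'rV[R]_d -> R) (gamma : 'I_n -> R) (lambda : 'I_k -> R)
  (theta : 'I_n -> 'rV[R]_d) (w : 'I_k -> 'rV[R]_d) (wbar : 'rV[R]_d) : R :=
  \sum_(j < k) (csum c j (fun i => f i (theta i)
                    + gamma i / 2 * (enorm (theta i - w j)) ^+ 2)
                + lambda j / 2 * (enorm (w j - wbar)) ^+ 2).

Definition clavg (R : realType) (n k d : nat) (c : 'I_n -> 'I_k)
  (gamma : 'I_n -> R) (theta : 'I_n -> 'rV[R]_d) (j : 'I_k) : 'rV[R]_d :=
  (csum c j gamma)^-1 *: \sum_(i < n | c i == j) gamma i *: theta i.

Definition glavg (R : realType) (n k d : nat) (c : 'I_n -> 'I_k)
  (gamma : 'I_n -> R) (alpha : 'I_k -> R) (theta : 'I_n -> 'rV[R]_d) : 'rV[R]_d :=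
  (\sum_(i < n) alpha (c i) * gamma i)^-1 *:
     \sum_(i < n) (alpha (c i) * gamma i) *: theta i.

Definition F_obj (R : realType) (n k d : nat) (c : 'I_n -> 'I_k)
  (f : 'I_n -> 'rV[R]_d -> R) (gamma : 'I_n -> R) (alpha : 'I_k -> R)
  (theta : 'I_n -> 'rV[R]_d) : R :=
  \sum_(j < k) csum c j (fun i =>
     f i (theta i)
     + (1 - alpha j) * gamma i / 2 * (enorm (theta i - clavg c gamma theta j)) ^+ 2
     + alpha j * gamma i / 2 * (enorm (theta i - glavg c gamma alpha theta)) ^+ 2).

Definition alpha_of (R : realType) (n k : nat) (c : 'I_n -> 'I_k)
  (gamma : 'I_n -> R) (lambda : 'I_k -> R) (j : 'I_k) : R :=
  lambda j / (lambda j + csum c j gamma).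

(* Completing the square, first in each cluster center w_j and then in the global
   center w-bar (weighted-variance decompositions), gives
     F_MTL theta w wbar = F theta + nonnegative squares,
   where the squares vanish at the optimal centers; the weights alpha_j = lambda_j /
   (lambda_j + sum_(i in I_j) gamma_i) are exactly what makes the remainder equal to F.
   Hence F_MTL at thetahat with the optimal centers equals F(thetahat) <= F(thetap) <= min F_MTL,
   so it is a second minimizer of F_MTL; as F_MTL is mu-strongly convex in theta, the two
   minimizers share their theta-part. *)

From HB Require Import structures.
From mathcomp Require Import all_boot all_order all_algebra.
From mathcomp Require Import all_classical all_reals all_analysis.
From mathcomp Require Import ring lra.
Set Implicit Arguments.
Unset Strict Implicit.
Unset Printing Implicit Defensive.

Import Order.TTheory GRing.Theory Num.Theory.
Import numFieldNormedType.Exports.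
Local Open Scope ring_scope.

Lemma wsum_sqr_decomp (F : fieldType) (I : finType) (P : pred I) (g y : I -> F) (w : F) :
  let G := \sum_(i | P i) g i in let ybar := G^-1 * \sum_(i | P i) g i * y i in
  G != 0 ->
  \sum_(i | P i) g i * (y i - w) ^+ 2 =
  \sum_(i | P i) g i * (y i - ybar) ^+ 2 + G * (ybar - w) ^+ 2.
Proof.
move=> G ybar G0.
have sum_gy : \sum_(i | P i) g i * y i = G * ybar by rewrite /ybar mulrA divff ?mul1r.
transitivity (\sum_(i | P i)
    (g i * (y i - ybar) ^+ 2 + (2 * (ybar - w)) * (g i * y i) - (ybar ^+ 2 - w ^+ 2) * g i)).
  by apply: eq_bigr => i _; ring.
by rewrite sumrB big_split /= -!mulr_sumr -/G sum_gy; ring.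
Qed.

Lemma sumr_affine (T : pzRingType) (I : finType) (P : pred I) (a b e : T) (X Y Z : I -> T) :
  a * \sum_(i | P i) X i + b * \sum_(i | P i) Y i - e * \sum_(i | P i) Z i
  = \sum_(i | P i) (a * X i + b * Y i - e * Z i).
Proof. by rewrite sumrB big_split /= -!mulr_sumr. Qed.

Section EuclideanNorm.
Variables (R : realType) (d : nat).
Implicit Types x v w : 'rV[R]_d.

Lemma enorm_sqrE x : enorm x ^+ 2 = \sum_(l < d) x 0 l ^+ 2.
Proof.
have dotv_ge0 : 0 <= dotv x x by apply: sumr_ge0 => l _; rewrite -expr2 sqr_ge0.
by rewrite /enorm sqr_sqrtr //; apply: eq_bigr => l _; rewrite expr2.
Qed.

Lemma enorm0 : enorm (0 : 'rV[R]_d) = 0.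
Proof. by rewrite /enorm /dotv big1 ?sqrtr0 // => l _; rewrite mxE mul0r. Qed.

Lemma enorm_sqr_eq0 x : enorm x ^+ 2 = 0 -> x = 0.
Proof.
rewrite enorm_sqrE => /eqP; rewrite psumr_eq0 => [/allP x0|l _]; last exact: sqr_ge0.
apply/rowP => l; rewrite mxE; apply/eqP.
by rewrite -sqrf_eq0; exact: x0 (mem_index_enum _).
Qed.

Definition wavg {I : finType} (P : pred I) (g : I -> R) (x : I -> 'rV[R]_d) :=
  (\sum_(i | P i) g i)^-1 *: \sum_(i | P i) g i *: x i.

Lemma wavg_coord (I : finType) (P : pred I) g (x : I -> 'rV[R]_d) l :
  wavg P g x 0 l = (\sum_(i | P i) g i)^-1 * \sum_(i | P i) g i * x i 0 l.
Proof. by rewrite mxE summxE; congr (_ * _); apply: eq_bigr => i _; rewrite mxE. Qed.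

Lemma wsum_enorm_decomp (I : finType) (P : pred I) g (x : I -> 'rV[R]_d) w :
  \sum_(i | P i) g i != 0 ->
  \sum_(i | P i) g i * enorm (x i - w) ^+ 2 =
  \sum_(i | P i) g i * enorm (x i - wavg P g x) ^+ 2
  + (\sum_(i | P i) g i) * enorm (wavg P g x - w) ^+ 2.
Proof.
move=> G0; under eq_bigr do rewrite enorm_sqrE mulr_sumr.
under [X in _ = X + _]eq_bigr do rewrite enorm_sqrE mulr_sumr.
rewrite exchange_big /= [X in _ = X + _]exchange_big /=.
rewrite enorm_sqrE mulr_sumr -big_split /=.
apply: eq_bigr => l _.
under [LHS]eq_bigr do rewrite !mxE.
rewrite (wsum_sqr_decomp (fun i => x i 0 l) (w 0 l) G0).
congr (_ + _).
  by apply: eq_bigr => i _; rewrite [(x i - _) 0 l]mxE [(- wavg P g x) 0 l]mxE wavg_coord.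
by rewrite [(_ - w) 0 l]mxE [(- w) 0 l]mxE wavg_coord.
Qed.

Lemma enorm_sqr_pair_decomp (a b : R) x v w : a + b != 0 ->
  a * enorm (x - w) ^+ 2 + b * enorm (w - v) ^+ 2 =
  a * b / (a + b) * enorm (x - v) ^+ 2
  + (a + b) * enorm ((a + b)^-1 *: (a *: x + b *: v) - w) ^+ 2.
Proof.
move=> ab0; rewrite !enorm_sqrE !mulr_sumr -!big_split; apply: eq_bigr => l _.
by rewrite /= !mxE; field.
Qed.

Lemma enorm_sqr_convex (t : R) x1 x2 y1 y2 : 0 <= t <= 1 ->
  enorm ((t *: x1 + (1 - t) *: x2) - (t *: y1 + (1 - t) *: y2)) ^+ 2
  <= t * enorm (x1 - y1) ^+ 2 + (1 - t) * enorm (x2 - y2) ^+ 2.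
Proof.
move=> /andP[t0 t1]; rewrite !enorm_sqrE !mulr_sumr -big_split; apply: ler_sum => l _.
rewrite /= !mxE -subr_ge0.
set a := x1 0 l - y1 0 l; set e := x2 0 l - y2 0 l.
have -> : t * a ^+ 2 + (1 - t) * e ^+ 2
    - (t * x1 0 l + (1 - t) * x2 0 l - (t * y1 0 l + (1 - t) * y2 0 l)) ^+ 2
    = t * (1 - t) * (a - e) ^+ 2 by rewrite /a /e; ring.
by rewrite mulr_ge0 ?sqr_ge0 // mulr_ge0 ?subr_ge0.
Qed.

End EuclideanNorm.

Section ClusteredObjectives.
Variables (R : realType) (n k d : nat) (c : 'I_n -> 'I_k).
Variables (f : 'I_n -> 'rV[R]_d -> R) (gamma : 'I_n -> R) (lambda : 'I_k -> R).
Hypothesis gamma_gt0 : forall i, 0 < gamma i.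
Hypothesis lambda_ge0 : forall j, 0 <= lambda j.
Implicit Types (theta : 'I_n -> 'rV[R]_d) (v wbar : 'rV[R]_d).
Local Notation alpha := (alpha_of c gamma lambda).

Lemma csum_gamma_gt0 : (forall j, exists i, c i = j) -> forall j, 0 < csum c j gamma.
Proof.
move=> c_onto j; have [i0 <-] := c_onto j.
rewrite /csum (bigD1 i0) //= ltr_wpDr // sumr_ge0 // => i _; exact: ltW.
Qed.

Hypothesis csum_gt0 : forall j, 0 < csum c j gamma.

Lemma alpha_ge0 j : 0 <= alpha j.
Proof. by rewrite divr_ge0 // addr_ge0 // ltW. Qed.

Lemma alpha_weights_gt0 : (exists j, lambda j != 0) ->
  (forall j, exists i, c i = j) -> 0 < \sum_(i < n) alpha (c i) * gamma i.
Proof.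
move=> [j0 lam_neq0] c_onto; have [i0 ci0] := c_onto j0.
rewrite (bigD1 i0) //= ltr_wpDr ?sumr_ge0 // => [i _|].
  by rewrite mulr_ge0 ?alpha_ge0 ?ltW.
rewrite mulr_gt0 // ci0 divr_gt0 ?ltr_wpDl //.
by rewrite lt_neqAle eq_sym lam_neq0 lambda_ge0.
Qed.

Lemma sum_clusters (a : 'I_k -> R) (h : 'I_n -> R) :
  \sum_(j < k) a j * \sum_(i < n | c i == j) h i = \sum_(i < n) a (c i) * h i.
Proof.
rewrite (partition_big c predT) //=; apply: eq_bigr => j _.
by rewrite mulr_sumr; apply: eq_bigr => i /eqP ->.
Qed.

Hypothesis alpha_weights_pos : 0 < \sum_(i < n) alpha (c i) * gamma i.

Local Notation A := (\sum_(i < n) alpha (c i) * gamma i).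
Local Notation avg := (glavg c gamma alpha).

(* The minimizer of F_MTL in the center w_j: the mean of the cluster average and w-bar
   with weights sum_(i in I_j) gamma_i and lambda_j. *)
Definition wopt (theta : 'I_n -> 'rV[R]_d) (wbar : 'rV[R]_d) (j : 'I_k) :=
  (csum c j gamma + lambda j)^-1 *:
    (csum c j gamma *: clavg c gamma theta j + lambda j *: wbar).

Lemma F_MTLE theta w wbar :
  F_MTL c f gamma lambda theta w wbar = \sum_(j < k) (csum c j (fun i => f i (theta i))
    + 2^-1 * (\sum_(i < n | c i == j) gamma i * enorm (theta i - w j) ^+ 2
              + lambda j * enorm (w j - wbar) ^+ 2)).
Proof.
apply: eq_bigr => j _; rewrite /csum big_split /= mulrDr mulr_sumr -addrA.
by congr (_ + (_ + _)); [apply: eq_bigr => i _ |]; ring.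
Qed.

Lemma F_objE theta :
  F_obj c f gamma alpha theta = \sum_(j < k) (csum c j (fun i => f i (theta i))
    + 2^-1 * ((1 - alpha j) * \sum_(i < n | c i == j)
                 gamma i * enorm (theta i - clavg c gamma theta j) ^+ 2
              + alpha j * \sum_(i < n | c i == j)
                 gamma i * enorm (theta i - avg theta) ^+ 2)).
Proof.
apply: eq_bigr => j _; rewrite /csum !big_split /= !mulr_sumr mulrDr !mulr_sumr -addrA.
by congr (_ + (_ + _)); apply: eq_bigr => i _; ring.
Qed.

Lemma cluster_penalty_decomp theta j w v :
  \sum_(i < n | c i == j) gamma i * enorm (theta i - w) ^+ 2 + lambda j * enorm (w - v) ^+ 2
  = (1 - alpha j) * \sum_(i < n | c i == j)
        gamma i * enorm (theta i - clavg c gamma theta j) ^+ 2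
    + alpha j * \sum_(i < n | c i == j) gamma i * enorm (theta i - v) ^+ 2
    + (csum c j gamma + lambda j) * enorm (wopt theta v j - w) ^+ 2.
Proof.
have G_neq0 : csum c j gamma != 0 by rewrite gt_eqF.
have GL_neq0 : csum c j gamma + lambda j != 0 by rewrite gt_eqF ?ltr_wpDr.
rewrite (wsum_enorm_decomp theta w G_neq0) (wsum_enorm_decomp theta v G_neq0).
rewrite -/(clavg c gamma theta j) -/(csum c j gamma).
rewrite -addrA (enorm_sqr_pair_decomp _ _ _ GL_neq0) /alpha_of.
by field; rewrite addrC.
Qed.

Lemma global_penalty_decomp theta v :
  \sum_(j < k) alpha j * \sum_(i < n | c i == j) gamma i * enorm (theta i - v) ^+ 2
  = \sum_(j < k) alpha j * \sum_(i < n | c i == j) gamma i * enorm (theta i - avg theta) ^+ 2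
    + A * enorm (avg theta - v) ^+ 2.
Proof.
rewrite !sum_clusters; under eq_bigr do rewrite mulrA.
under [X in _ = X + _]eq_bigr do rewrite mulrA.
exact: (wsum_enorm_decomp (P := xpredT) theta v (lt0r_neq0 alpha_weights_pos)).
Qed.

Lemma F_MTL_decomp theta w wbar :
  F_MTL c f gamma lambda theta w wbar = F_obj c f gamma alpha theta
    + 2^-1 * (\sum_(j < k) (csum c j gamma + lambda j) * enorm (wopt theta wbar j - w j) ^+ 2
              + A * enorm (avg theta - wbar) ^+ 2).
Proof.
rewrite F_MTLE F_objE; under eq_bigr do rewrite cluster_penalty_decomp.
by rewrite !big_split /= -!mulr_sumr !big_split /= global_penalty_decomp; ring.
Qed.

Lemma F_obj_le_F_MTL theta w wbar :
  F_obj c f gamma alpha theta <= F_MTL c f gamma lambda theta w wbar.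
Proof.
rewrite F_MTL_decomp lerDl mulr_ge0 ?addr_ge0 ?sumr_ge0 // => [j _|].
  by rewrite mulr_ge0 ?sqr_ge0 // addr_ge0 // ltW.
by rewrite mulr_ge0 ?sqr_ge0 // ltW.
Qed.

Lemma F_MTL_wopt theta :
  F_MTL c f gamma lambda theta (wopt theta (avg theta)) (avg theta) = F_obj c f gamma alpha theta.
Proof.
rewrite F_MTL_decomp subrr enorm0 expr0n mulr0 addr0 big1 ?mulr0 ?addr0 // => j _.
by rewrite subrr enorm0 expr0n mulr0.
Qed.

Local Notation mix t x y := (t *: x + (1 - t) *: y).

Lemma F_MTL_strongly_convex mu t th1 w1 v1 th2 w2 v2 :
  (forall i, strongly_convex mu (f i)) -> 0 <= t <= 1 ->
  F_MTL c f gamma lambda (fun i => mix t (th1 i) (th2 i)) (fun j => mix t (w1 j) (w2 j))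
    (mix t v1 v2)
  <= t * F_MTL c f gamma lambda th1 w1 v1 + (1 - t) * F_MTL c f gamma lambda th2 w2 v2
     - mu / 2 * t * (1 - t) * \sum_(i < n) enorm (th1 i - th2 i) ^+ 2.
Proof.
move=> f_sc t01; have /andP[t0 t1] := t01.
rewrite (partition_big c xpredT) //= sumr_affine; apply: ler_sum => j _.
have clients_le : csum c j (fun i => f i (mix t (th1 i) (th2 i))
      + gamma i / 2 * enorm (mix t (th1 i) (th2 i) - mix t (w1 j) (w2 j)) ^+ 2)
    <= t * csum c j (fun i => f i (th1 i) + gamma i / 2 * enorm (th1 i - w1 j) ^+ 2)
       + (1 - t) * csum c j (fun i => f i (th2 i) + gamma i / 2 * enorm (th2 i - w2 j) ^+ 2)
       - mu / 2 * t * (1 - t) * \sum_(i < n | c i == j) enorm (th1 i - th2 i) ^+ 2.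
  rewrite /csum sumr_affine; apply: ler_sum => i _.
  have f_le := f_sc i (th1 i) (th2 i) t t0 t1.
  have sq_le := ler_wpM2l (divr_ge0 (ltW (gamma_gt0 i)) (ler0n _ 2))
    (enorm_sqr_convex (th1 i) (th2 i) (w1 j) (w2 j) t01).
  lra.
have center_le := ler_wpM2l (divr_ge0 (lambda_ge0 j) (ler0n _ 2))
  (enorm_sqr_convex (w1 j) (w2 j) v1 v2 t01).
lra.
Qed.

Lemma F_MTL_argmin_eq_F_obj_argmin mu thetap what wbarhat thetahat :
  0 < mu -> (forall i, strongly_convex mu (f i)) ->
  (forall theta w wbar, F_MTL c f gamma lambda thetap what wbarhat
                        <= F_MTL c f gamma lambda theta w wbar) ->
  (forall theta, F_obj c f gamma alpha thetahat <= F_obj c f gamma alpha theta) ->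
  forall i, thetahat i = thetap i.
Proof.
move=> mu_gt0 f_sc MTL_min obj_min.
set what' := wopt thetahat (avg thetahat); set wbar' := avg thetahat.
have hat_le : F_MTL c f gamma lambda thetahat what' wbar'
              <= F_MTL c f gamma lambda thetap what wbarhat.
  by rewrite F_MTL_wopt; apply: le_trans (obj_min thetap) (F_obj_le_F_MTL _ _ _).
have half01 : 0 <= (2^-1 : R) <= 1 by rewrite invr_ge0 ler0n invf_le1 ?ler1n.
have mid_le := F_MTL_strongly_convex thetahat what' wbar' thetap what wbarhat f_sc half01.
have mid_ge := MTL_min (fun i => mix 2^-1 (thetahat i) (thetap i))
  (fun j => mix 2^-1 (what' j) (what j)) (mix 2^-1 wbar' wbarhat).
set S := \sum_(i < n) enorm (thetahat i - thetap i) ^+ 2 in mid_le.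
have : mu / 2 * 2^-1 * (1 - 2^-1) * S <= 0 by lra.
rewrite pmulr_rle0 ?mulr_gt0 ?divr_gt0 ?invr_gt0 ?subr_gt0 ?invf_lt1 ?ltr1n // => S_le0.
have S_eq0 : S = 0 by apply/eqP; rewrite eq_le S_le0 sumr_ge0 // => i _; exact: sqr_ge0.
move=> i; apply/eqP; rewrite -subr_eq0; apply/eqP/enorm_sqr_eq0.
by apply: (psumr_eq0P _ S_eq0) => // l _; exact: sqr_ge0.
Qed.

End ClusteredObjectives.

Theorem proposition2p1 (R : realType) (n k d : nat) (c : 'I_n -> 'I_k)
  (f : 'I_n -> 'rV[R]_d -> R) (mu L : R) (gamma : 'I_n -> R) (lambda : 'I_k -> R)
  (thetap : 'I_n -> 'rV[R]_d) (what : 'I_k -> 'rV[R]_d) (wbarhat : 'rV[R]_d)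
  (thetahat : 'I_n -> 'rV[R]_d) :
  (0 < d)%N ->
  (forall j : 'I_k, exists i : 'I_n, c i = j) ->
  0 < mu -> mu <= L ->
  (forall i, differentiable_everywhere (f i)) ->
  (forall i, strongly_convex mu (f i)) ->
  (forall i, L_smooth L (f i)) ->
  (forall i, 0 < gamma i) ->
  (forall j, 0 <= lambda j) ->
  (exists j, lambda j != 0) ->
  (forall theta w wbar,
     F_MTL c f gamma lambda thetap what wbarhat <= F_MTL c f gamma lambda theta w wbar) ->
  (forall theta,
     F_obj c f gamma (alpha_of c gamma lambda) thetahat
       <= F_obj c f gamma (alpha_of c gamma lambda) theta) ->
  forall i, thetahat i = thetap i.
Proof.
move=> _ c_onto mu_gt0 _ _ f_sc _ gamma_gt0 lambda_ge0 lambda_neq0 MTL_min obj_min.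
have csum_gt0 := csum_gamma_gt0 gamma_gt0 c_onto.
have A_gt0 := alpha_weights_gt0 gamma_gt0 lambda_ge0 csum_gt0 lambda_neq0 c_onto.
exact: (F_MTL_argmin_eq_F_obj_argmin gamma_gt0 lambda_ge0 csum_gt0 A_gt0 mu_gt0 f_sc
  MTL_min obj_min).
Qed.
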